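(* Let $m\ge2$, $K$ an algebraic number field, $a(z)\in K[z]$ monic of degree $m$, $b(z)\in K[z]$ of degree $\le m-1$ with $z^{m-1}$-coefficient $b_{m-1}$. Assume $a(z)=\prod_{i=1}^m(z-\alpha_i)$ with $\alpha_i\in K$ pairwise distinct, $s_i:=b(\alpha_i)/a'(\alpha_i)\in\mathbb{Q}\setminus\mathbb{Z}_{\le-1}$ for all $i$, and $b_{m-1}\notin\mathbb{Z}_{<-1}$. For $0\le j\le m-2$ let \[f_j(z)=\prod_{i=1}^m\Bigl(1-\frac{\alpha_i}{z}\Bigr)^{s_i}\cdot\frac{1}{z^{j+1}}F^{(m)}_D\Bigl(b_{m-1}+j+1,\,1+s_1,\ldots,1+s_m,\,b_{m-1}+j+2;\,\frac{\alpha_1}{z},\ldots,\frac{\alpha_m}{z}\Bigr).\] Then $f_0,\ldots,f_{m-2}$ are linearly independent over $K$, and $L\cdot f_j(z)\in K[z]$ for $0\le j\le m-2$, where $L=-a(z)\frac{d}{dz}+b(z)$.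
   Context: $(x)_0=1$, $(x)_k=x(x+1)\cdots(x+k-1)$; $F^{(m)}_D(\alpha,\beta_1,\ldots,\beta_m,\gamma;z_1,\ldots,z_m)=\sum_{k_1,\ldots,k_m\ge0}\frac{(\alpha)_{k_1+\cdots+k_m}\prod_i(\beta_i)_{k_i}}{(\gamma)_{k_1+\cdots+k_m}\prod_ik_i!}\prod_i z_i^{k_i}$; $(1-\alpha/z)^s=\sum_{k\ge0}\frac{(-s)_k}{k!}\alpha^kz^{-k}$. These are formal series in $(1/z)K[[1/z]]$, and $L\cdot f=-af'+bf$ with termwise differentiation. *)

From HB Require Import structures.
From mathcomp Require Import all_boot all_order all_algebra all_field.
Set Implicit Arguments. Unset Strict Implicit. Unset Printing Implicit Defensive.
Import Order.TTheory GRing.Theory Num.Theory.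
Local Open Scope ring_scope.

(* Formal power series in w = 1/z are represented by their coefficient
   sequences  g : nat -> K,  meaning  sum_n g n * z^(-n). *)

Section Series.
Variable K : fieldType.

Definition poch (x : K) (k : nat) : K := \prod_(i < k) (x + i%:R).

Definition pser_mul (f g : nat -> K) : nat -> K :=
  fun n => \sum_(k < n.+1) f k * g (n - k)%N.

Definition pser_one : nat -> K := fun n => if n == 0%N then 1 else 0.

Definition pser_shift (d : nat) (f : nat -> K) : nat -> K :=
  fun n => if (d <= n)%N then f (n - d)%N else 0.

(* (1 - alpha/z)^s = sum_k (-s)_k / k! * alpha^k * z^{-k} *)
Definition binser (s alpha : K) : nat -> K :=
  fun k => poch (- s) k / (k`!)%:R * alpha ^+ k.

(* F_D^{(m)}(A, beta_1..beta_m, G; x_1/z, ..., x_m/z) as a series in 1/z: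
   coefficient of z^{-n} is the sum over k_1+...+k_m = n. *)
Definition FDser (m : nat) (A : K) (beta : 'I_m -> K) (G : K) (x : 'I_m -> K)
  : nat -> K :=
  fun n => \sum_(k : {ffun 'I_m -> 'I_n.+1} | (\sum_(i < m) (k i : nat) == n)%N)
     (poch A n / poch G n *
      \prod_(i < m) (poch (beta i) (k i) / ((k i)`!)%:R * x i ^+ (k i))).

(* Termwise derivative d/dz of sum_n f n z^{-n}: d/dz z^{-n} = -n z^{-n-1}. *)
Definition pser_deriv (f : nat -> K) : nat -> K :=
  fun n => match n with 0%N => 0 | n'.+1 => - (n'%:R * f n') end.

Definition lcoef (g : nat -> K) (k : int) : K :=
  if (k <= 0)%R then g `|k|%N else 0.

Definition polymul_coef (p : {poly K}) (g : nat -> K) (k : int) : K :=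
  \sum_(i < size p) p`_i * lcoef g (k - i%:Z).

Definition Lop (a b : {poly K}) (f : nat -> K) : int -> K :=
  fun k => - polymul_coef a (pser_deriv f) k + polymul_coef b f k.

(* A Laurent series (with finitely many positive powers) lies in K[z]
   iff all its coefficients at negative powers of z vanish. *)
Definition in_polyK (h : int -> K) : Prop := forall k : int, (k < 0)%R -> h k = 0.

End Series.

Definition fj (K : fieldType) (m : nat) (alpha : 'I_m -> K) (s : 'I_m -> K)
  (bm1 : K) (j : nat) : nat -> K :=
  pser_mul (foldr (@pser_mul K) (@pser_one K) [seq binser (s i) (alpha i) | i <- enum 'I_m])
    (pser_shift j.+1
       (FDser (bm1 + j.+1%:R) (fun i => 1 + s i) (bm1 + j.+2%:R) alpha)).

(* In the variable w = 1/z put U(w) = w^m a(1/w) = prod_i (1 - alpha_i w) and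
   V(w) = w^(m-1) b(1/w); Lagrange interpolation at the alpha_i, with weights
   s_i = b(alpha_i)/a'(alpha_i), gives V = sum_i s_i prod_(l <> i) (1 - alpha_l w) and
   b_(m-1) = sum_i s_i. With theta = w d/dw one has L = w^(1-m) (U theta + V), so
   L f_j is a polynomial in z iff (U theta + V) f_j has degree < m in w.
   Now f_j = W G with W = prod_i (1 - alpha_i w)^(s_i), which satisfies
   U theta W + V W = b_(m-1) U W, and G = w^(j+1) sum_n A/(A+n) c_n w^n, where
   A = b_(m-1) + j + 1 and sum_n c_n w^n = prod_i (1 - alpha_i w)^(-1-s_i) = 1/(U W).
   Hence theta G + b_(m-1) G = A w^(j+1) / (U W), and (U theta + V) f_j = A w^(j+1)
   has degree j + 1 < m. Linear independence holds because f_j = w^(j+1) + O(w^(j+2)).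
   All identities between power series are checked modulo w^M for every M. *)

From HB Require Import structures.
From mathcomp Require Import all_boot all_order all_algebra all_field.
From mathcomp Require Import ring zify.
Import Order.TTheory GRing.Theory Num.Theory.
Set Implicit Arguments. Unset Strict Implicit. Unset Printing Implicit Defensive.
Local Open Scope ring_scope.

Notation "p = q %[modX^ M ]" := ('X^M %| p - q)
  (at level 70, q at next level, format "p  =  q  %[modX^  M ]").

Section TruncatedPowerSeries.
Variable K : fieldType.
Implicit Types (p q r U V W G H : {poly K}) (f g : nat -> K).

Definition theta p := 'X * p^`().

Definition trunc_ser M f : {poly K} := \poly_(i < M) f i.

Lemma coef_theta p n : (theta p)`_n = p`_n *+ n.
Proof. by rewrite /theta coefXM; case: n => [|n] //=; rewrite coef_deriv. Qed.

Lemma thetaM p q : theta (p * q) = theta p * q + p * theta q.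
Proof. by rewrite /theta derivM; ring. Qed.

Lemma eqmodXnP M p q :
  reflect (forall n, (n < M)%N -> p`_n = q`_n) (p = q %[modX^ M]).
Proof.
apply: (iffP (dvdpP _ _)) => [[r] | h].
  move/(canRL (subrK q)) => -> n hn.
  by rewrite coefD coefMXn hn add0r.
exists (drop_poly M (p - q)); rewrite -[LHS](poly_take_drop M).
suff -> : take_poly M (p - q) = 0 by rewrite add0r.
apply/polyP => n; rewrite coef_take_poly coef0 coefB.
by case: ifP => // /h ->; rewrite subrr.
Qed.

Lemma eqmodXn_refl M p : p = p %[modX^ M].
Proof. by rewrite subrr dvdp0. Qed.
#[local] Hint Resolve eqmodXn_refl : core.

Lemma eqmodXn_eq M p q : p = q -> p = q %[modX^ M].
Proof. by move=> ->. Qed.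

Lemma eqmodXn_trans M q p r : p = q %[modX^ M] -> q = r %[modX^ M] -> p = r %[modX^ M].
Proof. by move=> hpq hqr; rewrite -(subrK q p) -addrA dvdp_add. Qed.

Lemma eqmodXnD M p p' q q' :
  p = p' %[modX^ M] -> q = q' %[modX^ M] -> p + q = p' + q' %[modX^ M].
Proof. by move=> hp hq; rewrite opprD addrACA dvdp_add. Qed.

Lemma eqmodXnM M p p' q q' :
  p = p' %[modX^ M] -> q = q' %[modX^ M] -> p * q = p' * q' %[modX^ M].
Proof.
move=> hp hq; have -> : p * q - p' * q' = (p - p') * q + p' * (q - q') by ring.
by apply: dvdp_add; [apply: dvdp_mulr | apply: dvdp_mull].
Qed.

Lemma eqmodXn_theta M p q : p = q %[modX^ M] -> theta p = theta q %[modX^ M].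
Proof. by move/eqmodXnP=> h; apply/eqmodXnP => n hn; rewrite !coef_theta h. Qed.

Lemma eqmodXn_prod M (I : Type) (r : seq I) (P : pred I) (F G : I -> {poly K}) :
  (forall i, P i -> F i = G i %[modX^ M]) ->
  \prod_(i <- r | P i) F i = \prod_(i <- r | P i) G i %[modX^ M].
Proof. by move=> h; elim/big_ind2: _ => // *; apply: eqmodXnM. Qed.

Lemma eqmodXn_sum M (I : Type) (r : seq I) (P : pred I) (F G : I -> {poly K}) :
  (forall i, P i -> F i = G i %[modX^ M]) ->
  \sum_(i <- r | P i) F i = \sum_(i <- r | P i) G i %[modX^ M].
Proof. by move=> h; elim/big_ind2: _ => // *; apply: eqmodXnD. Qed.

Lemma coef_trunc_ser M f n : (n < M)%N -> (trunc_ser M f)`_n = f n.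
Proof. by move=> hn; rewrite coef_poly hn. Qed.

Lemma trunc_ser_widen M N f : (M <= N)%N -> trunc_ser N f = trunc_ser M f %[modX^ M].
Proof. by move=> hMN; apply/eqmodXnP => n hn; rewrite !coef_trunc_ser //; lia. Qed.

Lemma trunc_ser_mul M f g :
  trunc_ser M (pser_mul f g) = trunc_ser M f * trunc_ser M g %[modX^ M].
Proof.
apply/eqmodXnP => n hn; rewrite coef_trunc_ser // coefM; apply: eq_bigr => -[k /= hk] _.
by rewrite !coef_trunc_ser //; lia.
Qed.

Lemma trunc_ser_foldr M (I : Type) (l : seq I) (F : I -> nat -> K) :
  trunc_ser M (foldr (@pser_mul K) (@pser_one K) [seq F i | i <- l])
  = \prod_(i <- l) trunc_ser M (F i) %[modX^ M].
Proof.
elim: l => [|x l IH] /=.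
  apply/eqmodXnP => n hn; rewrite big_nil coef_trunc_ser // coef1.
  by rewrite /pser_one; case: (n == 0)%N.
by rewrite big_cons; apply: eqmodXn_trans (trunc_ser_mul _ _ _) _; apply: eqmodXnM.
Qed.

Lemma coef_prod_trunc_ser m M n (F : 'I_m -> nat -> K) : (n < M)%N ->
  (\prod_(i < m) trunc_ser M (F i))`_n =
  \sum_(k : {ffun 'I_m -> 'I_n.+1} | (\sum_(i < m) (k i : nat) == n)%N)
     \prod_(i < m) F i (k i).
Proof.
move=> hn; have /eqmodXnP -> // :
    \prod_i trunc_ser M (F i) = \prod_i trunc_ser n.+1 (F i) %[modX^ n.+1].
  by apply: eqmodXn_prod => i _; apply: trunc_ser_widen.
rewrite /trunc_ser; under eq_bigr do rewrite poly_def.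
rewrite bigA_distr_bigA coef_sum [RHS]big_mkcond /=; apply: eq_bigr => k _.
have -> : \prod_(i < m) (F i (k i) *: 'X^(k i)) =
          (\prod_(i < m) F i (k i))%:P * 'X^(\sum_(i < m) (k i : nat)).
  rewrite -prodrXr rmorph_prod -big_split /=.
  by apply: eq_bigr => i _; rewrite mul_polyC.
by rewrite coefCM coefXn eq_sym; case: (_ == _); rewrite ?mulr1 ?mulr0.
Qed.

Lemma theta_prod (I : eqType) (r : seq I) (F : I -> {poly K}) :
  uniq r ->
  theta (\prod_(i <- r) F i) = \sum_(i <- r) theta (F i) * \prod_(j <- r | j != i) F j.
Proof.
elim: r => [|x r IH] /=; first by rewrite !big_nil /theta derivC mulr0.
case/andP=> x_notin_r uniq_r; rewrite !big_cons thetaM IH // eqxx /=; congr (_ + _).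
  congr (_ * _); rewrite [RHS]big_seq_cond [LHS]big_seq; apply: eq_bigl => i.
  by case: (boolP (i \in r)) => //= i_in_r; apply/esym; apply: contraTneq i_in_r => ->.
rewrite big_distrr [LHS]big_seq [RHS]big_seq; apply: eq_bigr => i i_in_r /=.
have x_neq_i : x != i by apply: contraNneq x_notin_r => ->.
by rewrite big_cons x_neq_i mulrCA.
Qed.

Lemma theta_mul_ode M U V W G H (beta : K) :
  U * theta W + V * W = beta *: (U * W) %[modX^ M] ->
  theta G + beta *: G = H %[modX^ M] ->
  U * theta (W * G) + V * (W * G) = U * W * H %[modX^ M].
Proof.
move=> W_ode G_ode.
have -> : U * theta (W * G) + V * (W * G) =
    (U * theta W + V * W) * G + U * W * theta G by rewrite thetaM; ring.
apply: eqmodXn_trans (eqmodXnD (eqmodXnM W_ode (eqmodXn_refl _ _)) (eqmodXn_refl _ _)) _.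
have -> : beta *: (U * W) * G + U * W * theta G = U * W * (theta G + beta *: G).
  by rewrite -!mul_polyC; ring.
exact: eqmodXnM.
Qed.

End TruncatedPowerSeries.

#[export] Hint Resolve eqmodXn_refl : core.

Section Pochhammer.
Variable K : fieldType.
Implicit Types x : K.

Lemma poch0 x : poch x 0 = 1.
Proof. by rewrite /poch big_ord0. Qed.

Lemma pochS x k : poch x k.+1 = poch x k * (x + k%:R).
Proof. by rewrite /poch big_ord_recr. Qed.

Lemma pochSl x k : poch x k.+1 = x * poch (x + 1) k.
Proof.
rewrite /poch big_ord_recl addr0; congr (_ * _); apply: eq_bigr => i _.
by rewrite lift0 /= -addn1 natrD; ring.
Qed.

Lemma poch_ratio x k : poch (x + 1) k != 0 -> (x + k%:R) * (poch x k / poch (x + 1) k) = x.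
Proof. by move=> h; rewrite mulrA [_ * poch x k]mulrC -pochS pochSl -mulrA mulfV ?mulr1. Qed.

End Pochhammer.

Section BinomialSeries.
Variable K : fieldType.
Hypothesis K_char0 : [pchar K] =i pred0.
Implicit Types (s a : K) (p q : {poly K}).

Let natS_neq0 n : n.+1%:R != 0 :> K.
Proof. by rewrite ((pcharf0P K).1 K_char0). Qed.

Lemma binser0 s a : binser s a 0 = 1.
Proof. by rewrite /binser poch0 expr0 divr1 mulr1. Qed.

Lemma theta_binser M s a :
  (1 - a *: 'X) * theta (trunc_ser M (binser s a))
  = - (s * a) *: ('X * trunc_ser M (binser s a)) %[modX^ M].
Proof.
(* coefficientwise: (n + 1) c_(n+1) = (n - s) a c_n *)
apply/eqmodXnP => n hn; set B := trunc_ser M _.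
rewrite mulrBl mul1r -scalerAl coefB coefZ (coefXM (theta B)) coefZ (coefXM B).
case: n hn => [|n] hn /=; first by rewrite coef_theta mulr0n; ring.
rewrite !coef_theta /B !coef_trunc_ser ?(ltnW hn) // /binser pochS factS natrM exprS.
have nfact_neq0 : n`!%:R != 0 :> K by case: n`! (fact_gt0 n).
rewrite -[_ *+ n.+1]mulr_natr -[_ *+ n]mulr_natr.
by field; rewrite nfact_neq0 addrC natr1 natS_neq0.
Qed.

Lemma mul_1subZX_eqmodXn0 M a p :
  (1 - a *: 'X) * p = 0 %[modX^ M] -> p = 0 %[modX^ M].
Proof.
move/eqmodXnP => h; apply/eqmodXnP; elim=> [|n IH] hn; have := h _ hn;
  rewrite mulrBl mul1r -scalerAl coefB coefZ coefXM /= !coef0.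
  by rewrite mulr0 subr0.
by rewrite IH ?(ltnW hn) // coef0 mulr0 subr0.
Qed.

Lemma theta_eqmodXn0 M q : theta q = 0 %[modX^ M] -> q`_0 = 1 -> q = 1 %[modX^ M].
Proof.
move/eqmodXnP => h q0; apply/eqmodXnP => -[|n] hn; first by rewrite q0 coef1.
have /eqP := h _ hn; rewrite coef_theta coef0 coef1 -[_ *+ n.+1]mulr_natr mulf_eq0.
by rewrite (negPf (natS_neq0 n)) orbF => /eqP.
Qed.

(* The theta-derivative of the product vanishes, and its constant term is 1. *)
Lemma binser_reciprocal M s a :
  (1 - a *: 'X) * trunc_ser M (binser s a) * trunc_ser M (binser (-1 - s) a) = 1 %[modX^ M].
Proof.
have [->|M_gt0] := posnP M; first by rewrite expr0 dvd1p.
set u := 1 - a *: 'X; set B := trunc_ser M _; set C := trunc_ser M _.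
apply: theta_eqmodXn0; last first.
  by rewrite !coef0M coefB coef1 coefZ coefX !coef_trunc_ser // !binser0 /= mulr0 subr0 !mulr1.
apply: (mul_1subZX_eqmodXn0 (a := a)).
have theta_u : theta u = - a *: 'X.
  by rewrite /theta derivB derivZ derivX derivC sub0r scaleNr mulrN -scalerAr mulr1.
have -> : u * theta (u * B * C) =
    u * theta u * B * C + (u * theta B) * (u * C) + (u * B) * (u * theta C).
  by rewrite !thetaM; ring.
apply: eqmodXn_trans (eqmodXnD (eqmodXnD _ (eqmodXnM (theta_binser M s a) _))
                                (eqmodXnM _ (theta_binser M (-1 - s) a))) _ => //.
apply: eqmodXn_eq; rewrite theta_u /u /B /C -!mul_polyC.
by rewrite !(polyCN, polyCM, polyCB, polyC1); ring.
Qed.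

End BinomialSeries.

Section Reversal.
Variable K : fieldType.
Implicit Types p q : {poly K}.

(* X^d p(1/X), for p of degree at most d *)
Definition revp d p := \poly_(k < d.+1) p`_(d - k).

Lemma coef_revp d p k : (revp d p)`_k = if (k <= d)%N then p`_(d - k) else 0.
Proof. by rewrite coef_poly ltnS. Qed.

Lemma revp_mulXsubC d p c : (size p <= d.+1)%N ->
  revp d.+1 (p * ('X - c%:P)) = revp d p * (1 - c *: 'X).
Proof.
move=> hs; apply/polyP => k.
rewrite coef_revp !mulrBr mulr1 -scalerAr !coefB coefMC coefZ !coefMX !coef_revp.
case: k => [|k] /=; first by rewrite !subn0 (nth_default 0 hs) mul0r mulr0 !subr0.
rewrite subSS; case: (ltngtP k d) => [hkd|hkd|->].
- have -> : (d - k == 0)%N = false by apply/negbTE; lia.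
  by rewrite ltnS (ltnW hkd) subnS; ring.
- by rewrite ltnS leqNgt hkd mulr0 subr0.
- by rewrite subnn ltnSn eqxx; ring.
Qed.

Lemma revp_prod_XsubC (I : Type) (r : seq I) (P : pred I) (F : I -> K) :
  revp (count P r) (\prod_(i <- r | P i) ('X - (F i)%:P)) =
  \prod_(i <- r | P i) (1 - F i *: 'X).
Proof.
elim: r => [|x r IH].
  by rewrite !big_nil; apply/polyP => -[|k]; rewrite coef_revp !coef1.
rewrite !big_cons /=; case: (P x) => //=.
rewrite mulrC add1n revp_mulXsubC ?IH 1?mulrC //.
by rewrite -big_filter size_prod_XsubC size_filter.
Qed.

Lemma revp_sum d (I : Type) (r : seq I) (c : I -> K) (F : I -> {poly K}) :
  revp d (\sum_(i <- r) c i *: F i) = \sum_(i <- r) c i *: revp d (F i).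
Proof.
apply/polyP => k; rewrite coef_revp !coef_sum; case: (leqP k d) => hk.
  by apply: eq_bigr => i _; rewrite !coefZ coef_revp hk.
by rewrite big1 // => i _; rewrite coefZ coef_revp leqNgt hk mulr0.
Qed.

Lemma coef_revpM d p q n : (d <= n)%N ->
  (revp d p * q)`_n = \sum_(i < d.+1) p`_i * q`_(n - d + i).
Proof.
move=> hdn; rewrite /revp poly_def mulr_suml coef_sum.
rewrite (reindex_inj rev_ord_inj) /=; apply: eq_bigr => i _.
have hi : (i <= d)%N by rewrite -ltnS.
rewrite -scalerAl coefZ coefXnM subKn // ifF; last by apply/negbTE; lia.
by congr (_ * q`__); lia.
Qed.

End Reversal.

Lemma count_index_enum (I : finType) (P : pred I) : count P (index_enum I) = #|P|.
Proof. by rewrite -sum1_count sum1_card. Qed.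

Section Lagrange.
Variables (K : fieldType) (m : nat) (alpha : 'I_m -> K).
Hypothesis alpha_inj : injective alpha.
Let a := \prod_(i < m) ('X - (alpha i)%:P).

Definition lagrange_basis i := \prod_(l < m | l != i) ('X - (alpha l)%:P).

Lemma size_lagrange_basis i : size (lagrange_basis i) = m.
Proof.
rewrite /lagrange_basis -big_filter size_prod_XsubC size_filter count_index_enum.
by rewrite cardC1 card_ord prednK // (leq_ltn_trans _ (ltn_ord i)).
Qed.

Lemma horner_lagrange_basis i k : (lagrange_basis i).[alpha k] =
  if k == i then \prod_(l < m | l != i) (alpha i - alpha l) else 0.
Proof.
rewrite horner_prod; case: eqP => [->|/eqP hki].
  by apply: eq_bigr => l _; rewrite hornerXsubC.
by rewrite (bigD1 k hki) /= hornerXsubC subrr mul0r.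
Qed.

Lemma horner_deriv_prod_XsubC k :
  a^`().[alpha k] = \prod_(l < m | l != k) (alpha k - alpha l).
Proof.
rewrite /a (bigD1 k) //= derivM derivXsubC mul1r hornerD hornerM hornerXsubC.
by rewrite subrr mul0r addr0 -/(lagrange_basis k) horner_lagrange_basis eqxx.
Qed.

Lemma horner_deriv_prod_XsubC_neq0 k : a^`().[alpha k] != 0.
Proof.
rewrite horner_deriv_prod_XsubC; apply/prodf_neq0 => l hl.
by rewrite subr_eq0; apply: contra hl => /eqP /alpha_inj ->.
Qed.

Lemma lagrange_interpolation (b : {poly K}) : (size b <= m)%N ->
  b = \sum_(i < m) (b.[alpha i] / a^`().[alpha i]) *: lagrange_basis i.
Proof.
move=> size_b; set D := \sum_(i < m) _.
apply/eqP; rewrite -subr_eq0; apply/negPn/negP => hD.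
have roots : all (root (b - D)) [seq alpha k | k <- enum 'I_m].
  apply/allP => _ /mapP [k _ ->]; rewrite /root hornerD hornerN horner_sum.
  rewrite (bigD1 k) //= big1 => [|i hik]; last first.
    by rewrite hornerZ horner_lagrange_basis eq_sym (negPf hik) mulr0.
  rewrite addr0 hornerZ horner_lagrange_basis eqxx -horner_deriv_prod_XsubC.
  by rewrite divfK ?subrr ?horner_deriv_prod_XsubC_neq0.
have := max_poly_roots hD roots.
rewrite map_inj_uniq // enum_uniq size_map size_enum_ord => /(_ isT).
apply/negP; rewrite -leqNgt; apply: leq_trans (size_polyD _ _) _.
rewrite geq_max size_b size_opp; apply: leq_trans (size_sum _ _ _) _.
apply/bigmax_leqP => i _; apply: leq_trans (size_scale_leq _ _) _.
by rewrite size_lagrange_basis.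
Qed.

Lemma lead_coef_lagrange_interpolation (b : {poly K}) : (size b <= m)%N ->
  b`_m.-1 = \sum_(i < m) b.[alpha i] / a^`().[alpha i].
Proof.
move/lagrange_interpolation=> {1}->; rewrite coef_sum; apply: eq_bigr => i _.
have /monicP : lagrange_basis i \is monic by apply: monic_prod_XsubC.
by rewrite coefZ lead_coefE size_lagrange_basis => ->; rewrite mulr1.
Qed.

Lemma size_prod_XsubC_ord : size a = m.+1.
Proof. by rewrite size_prod_XsubC -count_predT count_index_enum card_ord. Qed.

Lemma revp_prod_XsubC_ord : revp m a = \prod_(i < m) (1 - alpha i *: 'X).
Proof. by rewrite -revp_prod_XsubC count_index_enum card_ord. Qed.

Lemma revp_lagrange_basis i :
  revp m.-1 (lagrange_basis i) = \prod_(l < m | l != i) (1 - alpha l *: 'X).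
Proof. by rewrite -revp_prod_XsubC count_index_enum cardC1 card_ord. Qed.

End Lagrange.

Section BinomialProduct.
Variables (K : fieldType) (m : nat) (alpha s : 'I_m -> K).
Hypothesis K_char0 : [pchar K] =i pred0.

Let u i := 1 - alpha i *: 'X.
Let B M i := trunc_ser M (binser (s i) (alpha i)).

Lemma binser_prod_ode M :
  \prod_i u i * theta (\prod_i B M i)
    + (\sum_i s i *: \prod_(l | l != i) u l) * \prod_i B M i
  = (\sum_i s i) *: (\prod_i u i * \prod_i B M i) %[modX^ M].
Proof.
set W := \prod_i B M i.
have termwise i : \prod_i u i * (theta (B M i) * \prod_(l | l != i) B M l)
    = - (s i * alpha i) *: ('X * \prod_(l | l != i) u l * W) %[modX^ M].
  have -> : \prod_i u i * (theta (B M i) * \prod_(l | l != i) B M l) =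
      (u i * theta (B M i)) * (\prod_(l | l != i) u l * \prod_(l | l != i) B M l).
    by rewrite (bigD1 i) //=; ring.
  apply: eqmodXn_trans (eqmodXnM (theta_binser K_char0 M (s i) (alpha i)) (eqmodXn_refl _ _)) _.
  have -> : W = B M i * \prod_(l | l != i) B M l by rewrite /W (bigD1 i).
  by apply: eqmodXn_eq; rewrite /B -!scalerAl; congr (_ *: _); ring.
rewrite {1}/W theta_prod ?index_enum_uniq // big_distrr /=.
apply: eqmodXn_trans.
  by apply: eqmodXnD; [exact: eqmodXn_sum (fun i _ => termwise i) | exact: eqmodXn_refl].
apply: eqmodXn_eq; rewrite big_distrl -big_split scaler_suml; apply: eq_bigr => i _.
by rewrite [\prod_i u i](bigD1 i) //= /u -!mul_polyC !(polyCN, polyCM); ring.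
Qed.

End BinomialProduct.

Section AppellSeries.
Variables (K : fieldType) (m : nat) (alpha s : 'I_m -> K) (A : K).

Let C M := \prod_(i < m) trunc_ser M (binser (-1 - s i) (alpha i)).

Lemma FDser_coef M n : (n < M)%N ->
  FDser A (fun i => 1 + s i) (A + 1) alpha n = poch A n / poch (A + 1) n * (C M)`_n.
Proof.
move=> hn; rewrite coef_prod_trunc_ser // /FDser -big_distrr /=; congr (_ * _).
apply: eq_bigr => k _; apply: eq_bigr => i _.
by rewrite /binser opprB opprK [s i + 1]addrC.
Qed.

Lemma FDser0 : FDser A (fun i => 1 + s i) (A + 1) alpha 0 = 1.
Proof.
rewrite (@FDser_coef 1) // !poch0 divr1 mul1r coef0_prod big1 // => i _.
by rewrite coef_trunc_ser // binser0.
Qed.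

Lemma theta_shift_FDser M (beta : K) (j : nat)
    (G := trunc_ser M (pser_shift j.+1 (FDser A (fun i => 1 + s i) (A + 1) alpha))) :
  A = beta + j.+1%:R -> (forall n, poch (A + 1) n != 0) ->
  theta G + beta *: G = A *: ('X^(j.+1) * C M) %[modX^ M].
Proof.
move=> A_def poch_neq0; apply/eqmodXnP => n hn.
rewrite coefD coef_theta !coefZ coefXnM coef_trunc_ser // /pser_shift.
case: (ltnP n j.+1) => h; first by rewrite mul0rn !mulr0 addr0.
rewrite (@FDser_coef M) 1?(leq_ltn_trans (leq_subr _ _) hn) //.
rewrite -mulr_natl -mulrDl mulrA; congr (_ * _).
have -> : n%:R + beta = A + (n - j.+1)%:R by rewrite A_def -addrA -natrD subnKC // addrC.
exact: poch_ratio.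
Qed.

End AppellSeries.

Lemma foldr_pser_mul0 (K : fieldType) (I : Type) (l : seq I) (F : I -> nat -> K) :
  (forall i, F i 0%N = 1) ->
  foldr (@pser_mul K) (@pser_one K) [seq F i | i <- l] 0%N = 1.
Proof.
by move=> F0; elim: l => [|x l IH] //=; rewrite /pser_mul big_ord1 /= F0 IH mul1r.
Qed.

Section FjSeries.
Variables (K : fieldType) (m : nat) (alpha s : 'I_m -> K) (bm1 : K).

Lemma fj_eq0 j n : (n <= j)%N -> fj alpha s bm1 j n = 0.
Proof.
move=> h; rewrite /fj /pser_mul big1 // => k _; rewrite /pser_shift ifN ?mulr0 //.
by rewrite -ltnNge ltnS; apply: leq_trans (leq_subr _ _) h.
Qed.

Lemma fj_lead j : fj alpha s bm1 j j.+1 = 1.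
Proof.
rewrite /fj /pser_mul big_ord_recl big1 ?addr0 => [|k _]; last first.
  by rewrite /pser_shift ifN ?mulr0 //= -ltnNge ltnS subSS leq_subr.
rewrite foldr_pser_mul0 => [|i]; last exact: binser0.
by rewrite /= subn0 /pser_shift leqnn subnn -[j.+2%:R]natr1 addrA FDser0 mul1r.
Qed.

End FjSeries.

Lemma lin_indep_triangular (K : fieldType) d (F : nat -> nat -> K) (c : 'I_d -> K) :
  (forall j n, (n <= j)%N -> F j n = 0) -> (forall j, F j j.+1 != 0) ->
  (forall n, \sum_(j < d) c j * F j n = 0) -> forall j, c j = 0.
Proof.
move=> F_low F_diag hc.
suff c0 k (hk : (k < d)%N) : c (Ordinal hk) = 0 by case=> k hk; apply: c0.
elim/ltn_ind: k hk => k IH hk.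
have /eqP := hc k.+1; rewrite (bigD1 (Ordinal hk)) //= big1 ?addr0.
  by rewrite mulf_eq0 (negPf (F_diag k)) orbF => /eqP.
move=> [i hi]; rewrite -val_eqE neq_ltn /= => /orP [ik | ki].
- by rewrite IH ?mul0r.
- by rewrite F_low ?mulr0.
Qed.

Lemma lcoef_neg (K : fieldType) (g : nat -> K) (N i : nat) :
  lcoef g (- (N%:Z) - (i%:Z)) = g (N + i)%N.
Proof. by rewrite -opprD -PoszD /lcoef oppr_le0 /= abszN absz_nat. Qed.

(* with w = 1/z, (L f)(z) = w^(1-d) ((revp d a) theta f + (revp d.-1 b) f)(w) *)
Lemma Lop_coef (K : fieldType) (a b : {poly K}) (f : nat -> K) d N :
  (0 < d)%N -> size a = d.+1 -> (size b <= d)%N ->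
  Lop a b f (- (N.+1)%:Z) =
  (revp d a * theta (trunc_ser (N.+1 + d) f)
   + revp d.-1 b * trunc_ser (N.+1 + d) f)`_(N + d).
Proof.
case: d => [//|d] _ size_a size_b /=.
rewrite coefD !coef_revpM; [|lia|lia].
rewrite /Lop /polymul_coef size_a; congr (_ + _).
  rewrite -sumrN; apply: eq_bigr => i _.
  rewrite lcoef_neg addSn /pser_deriv mulrN opprK coef_theta coef_trunc_ser; last first.
    by have := ltn_ord i; lia.
  by rewrite (_ : N + d.+1 - d.+1 + i = N + i)%N ?mulr_natl //; lia.
rewrite (big_ord_widen d.+1 (fun i => b`_i * lcoef f (- (N.+1%:Z) - (i%:Z)))) //.
rewrite big_mkcond /=; apply: eq_bigr => i _.
rewrite coef_trunc_ser; last by have := ltn_ord i; lia.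
case: ifP => hi; first by rewrite lcoef_neg; congr (_ * f _); lia.
by rewrite nth_default ?mul0r // leqNgt hi.
Qed.

Section OperatorL.
Variables (K : fieldType) (m : nat) (alpha s : 'I_m -> K) (a b : {poly K}).
Hypothesis K_char0 : [pchar K] =i pred0.
Hypothesis alpha_inj : injective alpha.
Hypothesis a_def : a = \prod_(i < m) ('X - (alpha i)%:P).
Hypothesis size_b : (size b <= m)%N.
Hypothesis s_def : forall i, s i = b.[alpha i] / a^`().[alpha i].
Hypothesis bm1_int : forall n : nat, b`_m.-1 != - (n.+2)%:R.

Lemma revp_b_interpolation :
  revp m.-1 b = \sum_i s i *: \prod_(l | l != i) (1 - alpha l *: 'X).
Proof.
rewrite (lagrange_interpolation alpha_inj size_b) revp_sum -a_def.
by apply: eq_bigr => i _; rewrite -s_def revp_lagrange_basis.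
Qed.

Lemma coef_b_interpolation : b`_m.-1 = \sum_i s i.
Proof.
rewrite (lead_coef_lagrange_interpolation alpha_inj size_b) -a_def.
by apply: eq_bigr => i _; rewrite s_def.
Qed.

Lemma fj_ode j M (f := fj alpha s b`_m.-1 j) :
  revp m a * theta (trunc_ser M f) + revp m.-1 b * trunc_ser M f
  = (b`_m.-1 + j.+1%:R) *: 'X^(j.+1) %[modX^ M].
Proof.
set A := b`_m.-1 + j.+1%:R.
set U := \prod_i (1 - alpha i *: 'X).
set W := \prod_i trunc_ser M (binser (s i) (alpha i)).
set C := \prod_i trunc_ser M (binser (-1 - s i) (alpha i)).
set G := trunc_ser M (pser_shift j.+1 (FDser A (fun i => 1 + s i) (A + 1) alpha)).
have f_WG : trunc_ser M f = W * G %[modX^ M].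
  apply: eqmodXn_trans; first exact: trunc_ser_mul.
  apply: eqmodXnM; last by rewrite /G /A -[j.+2%:R]natr1 addrA.
  apply: eqmodXn_trans; first exact: trunc_ser_foldr.
  by rewrite big_enum.
have UWC : U * W * C = 1 %[modX^ M].
  rewrite -!big_split /=; apply: eqmodXn_trans.
    by apply: eqmodXn_prod => i _; exact: binser_reciprocal.
  by rewrite big1_eq.
have G_ode : theta G + b`_m.-1 *: G = A *: ('X^(j.+1) * C) %[modX^ M].
  apply: theta_shift_FDser => // n; apply/prodf_neq0 => i _.
  apply: contra (bm1_int (j + i)); rewrite -addr_eq0.
  suff -> : b`_m.-1 + (j + i).+2%:R = A + 1 + i%:R by [].
  by rewrite /A -!natr1 natrD; ring.
have a_U : revp m a = U by rewrite a_def revp_prod_XsubC_ord.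
rewrite a_U revp_b_interpolation.
apply: (eqmodXn_trans (q := U * theta (W * G) + _ * (W * G))).
  by apply: eqmodXnD; apply: eqmodXnM => //; apply: eqmodXn_theta.
apply: eqmodXn_trans.
  apply: theta_mul_ode G_ode; rewrite coef_b_interpolation; exact: binser_prod_ode.
rewrite (_ : U * W * _ = A *: 'X^(j.+1) * (U * W * C)); last by rewrite -!mul_polyC; ring.
by rewrite -[X in _ = X %[modX^ _]]mulr1; apply: eqmodXnM.
Qed.

Lemma Lop_fj_in_polyK j : (j.+2 <= m)%N -> in_polyK (Lop a b (fj alpha s b`_m.-1 j)).
Proof.
move=> hj [//|N _]; rewrite NegzE.
have size_a : size a = m.+1 by rewrite a_def size_prod_XsubC_ord.
rewrite (@Lop_coef K a b _ m) //; last by lia.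
have /eqmodXnP -> // := fj_ode j (N.+1 + m).
by rewrite coefZ coefXn (_ : (N + m == j.+1)%N = false) ?mulr0 //; lia.
Qed.

End OperatorL.

Theorem lemma4p1 (K : fieldExtType rat) (m : nat) (hm : (2 <= m)%N)
  (a b : {poly K}) (alpha : 'I_m -> K) (s : 'I_m -> rat)
  (ha_monic : a \is monic) (ha_size : size a = m.+1)
  (hb_size : (size b <= m)%N)
  (ha_fact : a = \prod_(i < m) ('X - (alpha i)%:P))
  (halpha : injective alpha)
  (hs : forall i, ratr (s i) = b.[alpha i] / (a^`()).[alpha i])
  (hs_int : forall i (n : nat), s i != - (n.+1)%:R)
  (hb_int : forall n : nat, b`_m.-1 != - (n.+2)%:R) :
  (forall c : 'I_m.-1 -> K,
     (forall n : nat,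
        \sum_(j < m.-1) c j * fj alpha (fun i => ratr (s i)) b`_m.-1 j n = 0) ->
     forall j, c j = 0)
  /\
  (forall j : nat, (j <= m - 2)%N ->
     in_polyK (Lop a b (fj alpha (fun i => ratr (s i)) b`_m.-1 j))).
Proof.
(* [ha_monic] and [ha_size] follow from [ha_fact]. *)
have K_char0 : [pchar K] =i pred0 by move=> p; rewrite (pchar_lalg K) pchar_num.
split=> [c | j hj].
  apply: lin_indep_triangular => [j n | j]; first exact: fj_eq0.
  by rewrite fj_lead oner_eq0.
by apply: Lop_fj_in_polyK => //; lia.
Qed.
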